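(* Let $\mathcal A$ be a modal category whose semantic functor sends every object to a monotone and idempotent operator (i.e. $S\subseteq T\Rightarrow A^+(S)\subseteq A^+(T)$ and $A^+\circ A^+=A^+$). Let $X$ be a set, $G$ a set and $(A_a)_{a\in G}$ a family in $\mathcal A_X$. Then for any $n\ge1$ and any $a_1,\dots,a_n\in G$, and every $S\subseteq X$, $\big(\bigvee_{a\in G}A_a\big)^+(S)\subseteq A_{a_1}^+\big(A_{a_2}^+(\cdots A_{a_n}^+(S)\cdots)\big)$, where $\bigvee$ is the join in the complete lattice $\mathcal A_X$.
   Context: A modal category is a topological category $\mathcal A$ over $\mathbf{Set}$ (faithful forgetful functor in which every structured source has exactly one initial lift; each fibre $\mathcal A_X$ of objects over $X$, ordered by $A\le A'$ iff $\mathrm{id}_X$ is a morphism $A\to A'$, is a complete lattice) together with a concrete functor $(-)^+:\mathcal A\to\mathbf{CABAO}$; $A^+:\wp(X)\to\wp(X)$ denotes the operator assigned to $A\in\mathcal A_X$. $\mathbf{CABAO}$ has objects $(X,m)$, $m:\wp(X)\to\wp(X)$ arbitrary, and morphisms $f:(X,m)\to(Y,n)$ functions with $f^{-1}(n(T))\subseteq m(f^{-1}(T))$ for all $T\subseteq Y$. *)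

From Stdlib Require Import List.
Import ListNotations.

Definition subset {X : Type} (S T : X -> Prop) : Prop := forall x, S x -> T x.

(* A (concrete) category over Set, presented fibrewise (amnestic presentation):
   Str X = objects with underlying set X (the fibre A_X),
   Hom A B f = "the function f : X -> Y is a morphism A -> B".
   Morphisms are functions, so the forgetful functor is faithful.
   A modal category additionally carries the concrete functor (-)^+ to CABAO,
   given on objects by op A : P(X) -> P(X); on morphisms it is the identity on
   underlying functions, so functoriality is the CABAO-morphism condition
   f^{-1}(op B T) ⊆ op A (f^{-1} T). *)
Record ModalCategory := {
  Str : Type -> Type;
  Hom : forall (X Y : Type), Str X -> Str Y -> (X -> Y) -> Prop;
  hom_id : forall (X : Type) (A : Str X), Hom X X A A (fun x => x);
  hom_comp : forall (X Y Z : Type) (A : Str X) (B : Str Y) (C : Str Z)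
               (f : X -> Y) (g : Y -> Z),
      Hom X Y A B f -> Hom Y Z B C g -> Hom X Z A C (fun x => g (f x));
  (* topological: every structured source (f_i : X -> Y_i, B_i)_{i in I}
     has exactly one initial lift A in the fibre over X *)
  initial_lift : forall (X : Type) (I : Type) (Y : I -> Type)
      (B : forall i, Str (Y i)) (f : forall i, X -> Y i),
      exists! A : Str X, forall (Z : Type) (C : Str Z) (g : Z -> X),
        Hom Z X C A g <-> (forall i, Hom Z (Y i) C (B i) (fun z => f i (g z)));
  (* the fibre order A <= A' iff id_X : A -> A' is a partial order ... *)
  fibre_antisym : forall (X : Type) (A A' : Str X),
      Hom X X A A' (fun x => x) -> Hom X X A' A (fun x => x) -> A = A';
  fibre_complete : forall (X : Type) (I : Type) (F : I -> Str X),
      exists J : Str X,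
        (forall i, Hom X X (F i) J (fun x => x)) /\
        (forall K : Str X, (forall i, Hom X X (F i) K (fun x => x)) ->
                           Hom X X J K (fun x => x));
  op : forall (X : Type), Str X -> (X -> Prop) -> (X -> Prop);
  op_functor : forall (X Y : Type) (A : Str X) (B : Str Y) (f : X -> Y),
      Hom X Y A B f ->
      forall (T : Y -> Prop), subset (fun x => op Y B T (f x))
                                     (op X A (fun x => T (f x)))
}.

Arguments Str : clear implicits.
Arguments Hom _ {X Y} _ _ _.
Arguments op _ {X} _ _ _.

Definition fibre_le (M : ModalCategory) {X : Type} (A A' : Str M X) : Prop :=
  Hom M A A' (fun x => x).

Definition is_join (M : ModalCategory) {X : Type} {G : Type}
    (F : G -> Str M X) (J : Str M X) : Prop :=
  (forall a, fibre_le M (F a) J) /\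
  (forall K, (forall a, fibre_le M (F a) K) -> fibre_le M J K).

Definition iter_ops (M : ModalCategory) {X G : Type} (F : G -> Str M X)
    (l : list G) (S : X -> Prop) : X -> Prop :=
  fold_right (fun a T => op M (F a) T) S l.

(* The join J lies above every A_a, so contravariance of (-)^+ along the
   identity gives J^+ T ⊆ A_a^+ T for every a.  Idempotence lets J^+ S be
   unfolded into J^+ (J^+ (... J^+ S)) with n factors, and monotonicity lets
   each factor be replaced in turn by the corresponding A_{a_i}^+. *)
From Stdlib Require Import List.
Import ListNotations.

Lemma op_antitone (M : ModalCategory) (X : Type) (A B : Str M X)
    (T : X -> Prop) :
  fibre_le M A B -> subset (op M B T) (op M A T).
Proof. intros HAB. exact (op_functor M X X A B (fun x => x) HAB T). Qed.

Lemma op_join_sub (M : ModalCategory) (X G : Type) (F : G -> Str M X)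
    (J : Str M X) (a : G) (T : X -> Prop) :
  is_join M F J -> subset (op M J T) (op M (F a) T).
Proof. intros [Hub _]. apply op_antitone, Hub. Qed.

Section IdempotentBelowIterates.

Variables (X G : Type) (m : (X -> Prop) -> X -> Prop)
  (n : G -> (X -> Prop) -> X -> Prop).

Hypothesis n_mono : forall a S T, subset S T -> subset (n a S) (n a T).
Hypothesis m_idem : forall S, subset (m S) (m (m S)).
Hypothesis m_below : forall a T, subset (m T) (n a T).

Lemma idempotent_sub_fold (l : list G) (S : X -> Prop) :
  l <> [] -> subset (m S) (fold_right n S l).
Proof.
  induction l as [|a l IH]; intros Hl; [congruence|].
  destruct l as [|b l'].
  - apply m_below.
  - intros x Hx. apply m_idem, (m_below a) in Hx.
    exact (n_mono a _ _ (IH ltac:(discriminate)) x Hx).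
Qed.

End IdempotentBelowIterates.

Theorem lemma4 (M : ModalCategory)
  (Hmono : forall (X : Type) (A : Str M X) (S T : X -> Prop),
      subset S T -> subset (op M A S) (op M A T))
  (Hidem : forall (X : Type) (A : Str M X) (S : X -> Prop) (x : X),
      op M A (op M A S) x <-> op M A S x)
  (X G : Type) (F : G -> Str M X) (J : Str M X) (HJ : is_join M F J)
  (l : list G) (Hl : l <> nil) (S : X -> Prop) :
  subset (op M J S) (iter_ops M F l S).
Proof.
  apply (idempotent_sub_fold X G (op M J) (fun a => op M (F a))); auto.
  - intros T x. apply Hidem.
  - intros a T. exact (op_join_sub M X G F J a T HJ).
Qed.
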